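(* Let $\mathcal T=(\mathcal S,\to)$ be an LTS over $\Sigma$, $\mathcal V$ a valuation, $Z\in\mathrm{Var}$, $\sigma\in\{\mu,\nu\}$, and $\Phi$ a fixpoint-free formula in positive normal form such that $\sigma Z.\Phi$ is well-formed, and let $S=[\![\sigma Z.\Phi]\!]_{\mathcal V}$. Then $S\vdash^{\mathcal T}_{\mathcal V,\varepsilon}\sigma Z.\Phi$ ($\varepsilon$ the empty definition list) has a successful tableau.
   Context: Fix a set $\Sigma$ and a countably infinite set $\mathrm{Var}$ of variables. An LTS is $\mathcal T=(\mathcal S,\to)$ with ${\to}\subseteq\mathcal S\times\Sigma\times\mathcal S$; $s\xrightarrow{K}s'$ means $s\xrightarrow{a}s'$ for some $a\in K$. A valuation is $\mathcal V:\mathrm{Var}\to 2^{\mathcal S}$. Formulas: $\Phi::=Z\mid\neg\Phi\mid\Phi_1\wedge\Phi_2\mid[K]\Phi\mid\nu Z.\Phi$, well-formed if in each $\nu Z.\Phi$ every free occurrence of $Z$ in $\Phi$ is under an even number of negations. Derived: $\vee$, $\langle K\rangle\Phi=\neg[K]\neg\Phi$, $\mu Z.\Phi=\neg\nu Z.\neg\Phi[Z:=\neg Z]$. Semantics: $[\![Z]\!]_{\mathcal V}=\mathcal V(Z)$, negation = complement, $\wedge$ = intersection, $[\![[K]\Phi]\!]_{\mathcal V}=\{s\mid\forall s'.\ s\xrightarrow{K}s'\Rightarrow s'\in[\![\Phi]\!]_{\mathcal V}\}$, $[\![\nu Z.\Phi]\!]_{\mathcal V}=\bigcup\{S'\mid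 S'\subseteq[\![\Phi]\!]_{\mathcal V[Z:=S']}\}$ (so $[\![\mu Z.\Phi]\!]$ is the least fixpoint). Positive normal form: built from $Z,\neg Z,\wedge,\vee,[K],\langle K\rangle,\nu,\mu$. Fixpoint-free: no subformula $\nu Z.\Psi$ or $\mu Z.\Psi$. Definition list $\Delta=(U_1=\Phi_1)\cdots(U_n=\Phi_n)$: distinct $U_i$, no $U_i$ bound in any $\Phi_j$, $U_j$ not free in $\Phi_i$ for $i\le j$; $\Delta(U_i)=\Phi_i$. Sequent $S\vdash^{\mathcal T}_{\mathcal V,\Delta}\Phi$: $S\subseteq\mathcal S$, $\Phi$ in positive normal form, every $U\in\mathrm{dom}(\Delta)$ positive and not bound in $\Phi$. Rules (conclusion; premises): ($\wedge$) $S\vdash_\Delta\Phi_1\wedge\Phi_2$; $S\vdash_\Delta\Phi_1$, $S\vdash_\Delta\Phi_2$. ($\vee$) $S\vdash_\Delta\Phi_1\vee\Phi_2$; $S_1\vdash_\Delta\Phi_1$, $S_2\vdash_\Delta\Phi_2$, $S=S_1\cup S_2$. ($[K]$) $S\vdash_\Delta[K]\Phi$; $\{s'\mid\exists s\in S.\ s\xrightarrow{K}s'\}\vdash_\Delta\Phi$. ($\langle K\rangle$, witness $f:S\to\mathcal S$, $s\xrightarrow{K}f(s)$) $S\vdash_\Delta\langle K\rangle\Phi$; $f(S)\vdash_\Delta\Phi$. ($\sigma Z$) $S\vdash_\Delta\sigma Z.\Phi$; $S\vdash_{\Delta\cdot(U=\sigma Z.\Phi)}U$, $U$ fresh. (Un)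 $S\vdash_\Delta U$; $S\vdash_\Delta\Phi[Z:=U]$, $\Delta(U)=\sigma Z.\Phi$. (Thin) $S\vdash_\Delta\Phi$; $S'\vdash_\Delta\Phi$, $S\subseteq S'$. A tableau is a finite nonempty ordered tree of nodes labelled by sequents over $\mathcal T,\mathcal V$, each internal node labelled by a rule application (plus witness function for $\langle K\rangle$) forming a rule instance with its ordered children, whose root has empty definition list and whose leaves $n$ (sequent $S_n\vdash_\Delta\Phi$) are terminal: (a) $\Phi\in\{Z,\neg Z\}$, $Z\notin\mathrm{dom}(\Delta)$; (b) $\Phi=\langle K\rangle\Psi$ and some $s\in S_n$ has no $K$-successor; (c) $\Phi=U\in\mathrm{dom}(\Delta)$ and some strict ancestor $m$ has formula $U$ with $S_n\subseteq S_m$ ($\mu$-/$\nu$-leaf according to $\Delta(U)$). Companion nodes: nodes with rule Un; companion leaves of $m$: leaves strictly below $m$ with the same formula and $S_n\subseteq S_m$, excluding companion leaves of companion nodes strictly below $m$. For a child $n'$ of $n$: $s'<_{n',n}s$ iff $s'\in S_{n'}$, $s\in S_n$ and (rule $[K]$, $s\xrightarrow{K}s'$) or (rule $(\langle K\rangle,f)$, $s'=f(s)$) or (other rule, $s'=s$). $\lessdot_{n',n}$ is least with $s\lessdot_{n,n}s$ and ($s'\lessdot_{n',m}s''$, $s''<_{m,n}s$)$\Rightarrow s'\lessdot_{n',n}s$. $<:_{n',n}$, $<:_m$ are least with: $s'<:_m s$ iff some companion leaf $m'$ of $m$ has $s'\in S_{m'}$, $s'<:_{m',m}s$; $s'<:_{n',n}s$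 iff $s'\in S_{n'}$, $s\in S_n$, and $s'\lessdot_{n',n}s$ or some companion node $m\notin\{n,n'\}$ and $t,t'\in S_m$ satisfy $s'<:_{n',m}t'$, $t'(<:_m)^+t$, $t\lessdot_{m,n}s$. A leaf is successful iff: formula $Z$ and $S_n\subseteq\mathcal V(Z)$; or $\neg Z$ and $S_n\cap\mathcal V(Z)=\emptyset$; or $\nu$-leaf; or $\mu$-leaf whose companion node $m$ has $<:_m$ well-founded. A tableau is successful iff all its leaves are successful. *)

From Stdlib Require Import List Arith Relations.
Import ListNotations.
Set Implicit Arguments.

Definition var := nat.

(* Formulas.  The derived connectives (or, diamond, mu) are included as
   constructors; their semantics below is exactly the semantics of their
   defining abbreviations. *)
Inductive form (A : Type) : Type :=
| FVar : var -> form A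
| FNeg : form A -> form A
| FAnd : form A -> form A -> form A
| FOr  : form A -> form A -> form A
| FBox : (A -> Prop) -> form A -> form A
| FDia : (A -> Prop) -> form A -> form A
| FNu  : var -> form A -> form A
| FMu  : var -> form A -> form A.
Arguments FVar {A}.

Definition step {St A : Type} (tr : St -> A -> St -> Prop) (K : A -> Prop) (s s' : St) : Prop :=
  exists a, K a /\ tr s a s'.

Definition upd {St : Type} (V : var -> St -> Prop) (Z : var) (S : St -> Prop) : var -> St -> Prop :=
  fun X => if Nat.eqb X Z then S else V X.

Fixpoint sem {St A : Type} (tr : St -> A -> St -> Prop) (V : var -> St -> Prop) (f : form A)
  : St -> Prop :=
  match f with
  | FVar X => V X
  | FNeg g => fun s => ~ sem tr V g s
  | FAnd g h => fun s => sem tr V g s /\ sem tr V h s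
  | FOr g h => fun s => sem tr V g s \/ sem tr V h s
  | FBox K g => fun s => forall s', step tr K s s' -> sem tr V g s'
  | FDia K g => fun s => exists s', step tr K s s' /\ sem tr V g s'
  | FNu Z g => fun s => exists S' : St -> Prop,
                 (forall x, S' x -> sem tr (upd V Z S') g x) /\ S' s
  | FMu Z g => fun s => forall S' : St -> Prop,
                 (forall x, sem tr (upd V Z S') g x -> S' x) -> S' s
  end.

Fixpoint free_in {A} (X : var) (f : form A) : Prop :=
  match f with
  | FVar Y => Y = X
  | FNeg g => free_in X g
  | FAnd g h | FOr g h => free_in X g \/ free_in X h
  | FBox _ g | FDia _ g => free_in X g
  | FNu Y g | FMu Y g => Y <> X /\ free_in X g
  end.

Fixpoint bound_in {A} (X : var) (f : form A) : Prop :=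
  match f with
  | FVar _ => False
  | FNeg g => bound_in X g
  | FAnd g h | FOr g h => bound_in X g \/ bound_in X h
  | FBox _ g | FDia _ g => bound_in X g
  | FNu Y g | FMu Y g => Y = X \/ bound_in X g
  end.

Fixpoint occurs_in {A} (X : var) (f : form A) : Prop :=
  match f with
  | FVar Y => Y = X
  | FNeg g => occurs_in X g
  | FAnd g h | FOr g h => occurs_in X g \/ occurs_in X h
  | FBox _ g | FDia _ g => occurs_in X g
  | FNu Y g | FMu Y g => Y = X \/ occurs_in X g
  end.

(* For the derived
   connectives the count is that of their unfolding (mu Z.g = ~nu Z.~g[Z:=~Z]
   adds two negations above every other variable; or/diamond add none on net). *)
Fixpoint par {A} (Z : var) (b : bool) (f : form A) : Prop :=
  match f with
  | FVar Y => Y = Z -> b = true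
  | FNeg g => par Z (negb b) g
  | FAnd g h | FOr g h => par Z b g /\ par Z b h
  | FBox _ g | FDia _ g => par Z b g
  | FNu Y g | FMu Y g => Y = Z \/ par Z b g
  end.

Definition positive {A} (Z : var) (f : form A) : Prop := par Z true f.

Fixpoint wellformed {A} (f : form A) : Prop :=
  match f with
  | FVar _ => True
  | FNeg g => wellformed g
  | FAnd g h | FOr g h => wellformed g /\ wellformed h
  | FBox _ g | FDia _ g => wellformed g
  | FNu Z g | FMu Z g => par Z true g /\ wellformed g
  end.

Fixpoint pnf {A} (f : form A) : Prop :=
  match f with
  | FVar _ => True
  | FNeg g => exists X, g = FVar X
  | FAnd g h | FOr g h => pnf g /\ pnf h
  | FBox _ g | FDia _ g => pnf g
  | FNu _ g | FMu _ g => pnf g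
  end.

Fixpoint fixpoint_free {A} (f : form A) : Prop :=
  match f with
  | FVar _ => True
  | FNeg g => fixpoint_free g
  | FAnd g h | FOr g h => fixpoint_free g /\ fixpoint_free h
  | FBox _ g | FDia _ g => fixpoint_free g
  | FNu _ _ | FMu _ _ => False
  end.

Fixpoint subst {A} (Z U : var) (f : form A) : form A :=
  match f with
  | FVar Y => if Nat.eqb Y Z then FVar U else FVar Y
  | FNeg g => FNeg (subst Z U g)
  | FAnd g h => FAnd (subst Z U g) (subst Z U h)
  | FOr g h => FOr (subst Z U g) (subst Z U h)
  | FBox K g => FBox K (subst Z U g)
  | FDia K g => FDia K (subst Z U g)
  | FNu Y g => if Nat.eqb Y Z then FNu Y g else FNu Y (subst Z U g)
  | FMu Y g => if Nat.eqb Y Z then FMu Y g else FMu Y (subst Z U g)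
  end.

Definition deflist (A : Type) := list (var * form A).

Definition dom {A} (D : deflist A) (U : var) : Prop := In U (map fst D).

Fixpoint lookup {A} (D : deflist A) (U : var) : option (form A) :=
  match D with
  | [] => None
  | (V, f) :: D' => if Nat.eqb V U then Some f else lookup D' U
  end.

Definition is_deflist {A} (D : deflist A) : Prop :=
  NoDup (map fst D) /\
  (forall U f, dom D U -> In f (map snd D) -> ~ bound_in U f) /\
  (forall i j Ui fi Uj fj, nth_error D i = Some (Ui, fi) -> nth_error D j = Some (Uj, fj) ->
     i <= j -> ~ free_in Uj fi).

Record sequent (St A : Type) : Type := Seq {
  sset  : St -> Prop;
  sdefs : deflist A;
  sform : form A }.

Definition is_sequent {St A} (s : sequent St A) : Prop :=
  is_deflist (sdefs s) /\ pnf (sform s) /\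
  (forall U, dom (sdefs s) U -> positive U (sform s) /\ ~ bound_in U (sform s)).

Definition seteq {St} (S T : St -> Prop) : Prop := forall x, S x <-> T x.
Definition subset {St} (S T : St -> Prop) : Prop := forall x, S x -> T x.

Inductive rule_app (St : Type) : Type :=
| RAnd | ROr | RBox | RDia (f : St -> St) | RFix | RUn | RThin.
Arguments RAnd {St}. Arguments ROr {St}. Arguments RBox {St}.
Arguments RFix {St}. Arguments RUn {St}. Arguments RThin {St}.

Definition fresh {St A} (U : var) (c : sequent St A) : Prop :=
  ~ dom (sdefs c) U /\ ~ occurs_in U (sform c) /\
  (forall f, In f (map snd (sdefs c)) -> ~ occurs_in U f).

Definition rule_ok {St A} (tr : St -> A -> St -> Prop) (r : rule_app St)
  (c : sequent St A) (ps : list (sequent St A)) : Prop :=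
  match r, ps with
  | RAnd, [p1; p2] =>
      sform c = FAnd (sform p1) (sform p2) /\ sdefs p1 = sdefs c /\ sdefs p2 = sdefs c /\
      seteq (sset p1) (sset c) /\ seteq (sset p2) (sset c)
  | ROr, [p1; p2] =>
      sform c = FOr (sform p1) (sform p2) /\ sdefs p1 = sdefs c /\ sdefs p2 = sdefs c /\
      seteq (sset c) (fun x => sset p1 x \/ sset p2 x)
  | RBox, [p] =>
      (exists K, sform c = FBox K (sform p) /\
        seteq (sset p) (fun y => exists x, sset c x /\ step tr K x y)) /\
      sdefs p = sdefs c
  | RDia f, [p] =>
      (exists K, sform c = FDia K (sform p) /\
        (forall x, sset c x -> step tr K x (f x))) /\
      seteq (sset p) (fun y => exists x, sset c x /\ y = f x) /\
      sdefs p = sdefs c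
  | RFix, [p] =>
      (exists Z g, sform c = FNu Z g \/ sform c = FMu Z g) /\
      (exists U, fresh U c /\ sdefs p = sdefs c ++ [(U, sform c)] /\ sform p = FVar U) /\
      seteq (sset p) (sset c)
  | RUn, [p] =>
      (exists U Z g, sform c = FVar U /\
        (lookup (sdefs c) U = Some (FNu Z g) \/ lookup (sdefs c) U = Some (FMu Z g)) /\
        sform p = subst Z U g) /\
      sdefs p = sdefs c /\ seteq (sset p) (sset c)
  | RThin, [p] =>
      sform p = sform c /\ sdefs p = sdefs c /\ subset (sset c) (sset p)
  | _, _ => False
  end.

Inductive tree (St A : Type) : Type :=
| Node : sequent St A -> option (rule_app St) -> list (tree St A) -> tree St A.

Definition label {St A} (t : tree St A) : sequent St A :=
  match t with Node s _ _ => s end.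

Definition addr := list nat.

Fixpoint subtree {St A} (t : tree St A) (p : addr) : option (tree St A) :=
  match p with
  | [] => Some t
  | i :: q => match t with
              | Node _ _ ch => match nth_error ch i with
                               | Some t' => subtree t' q
                               | None => None
                               end
              end
  end.

Definition is_node {St A} (t : tree St A) (p : addr) : Prop := subtree t p <> None.

Definition seq_at {St A} (t : tree St A) (p : addr) (s : sequent St A) : Prop :=
  exists r ch, subtree t p = Some (Node s r ch).

Definition rule_at {St A} (t : tree St A) (p : addr) (r : rule_app St) : Prop :=
  exists s ch, subtree t p = Some (Node s (Some r) ch).

Definition is_leaf {St A} (t : tree St A) (p : addr) : Prop :=
  exists s r, subtree t p = Some (Node s r []).

Definition inS {St A} (t : tree St A) (p : addr) (x : St) : Prop :=
  exists s, seq_at t p s /\ sset s x.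

Definition strict_anc (q p : addr) : Prop := exists r, r <> [] /\ p = q ++ r.

Definition terminal {St A} (tr : St -> A -> St -> Prop) (t : tree St A) (p : addr)
  (s : sequent St A) : Prop :=
  (exists Z, (sform s = FVar Z \/ sform s = FNeg (FVar Z)) /\ ~ dom (sdefs s) Z) \/
  (exists K g, sform s = FDia K g /\ exists x, sset s x /\ ~ exists y, step tr K x y) \/
  (exists U, sform s = FVar U /\ dom (sdefs s) U /\
     exists q sq, strict_anc q p /\ seq_at t q sq /\ sform sq = FVar U /\
                  subset (sset s) (sset sq)).

Definition node_ok {St A} (tr : St -> A -> St -> Prop) (t : tree St A) (p : addr) : Prop :=
  forall s r ch, subtree t p = Some (Node s r ch) ->
    is_sequent s /\
    match ch with
    | [] => r = None /\ terminal tr t p s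
    | _ => exists ra, r = Some ra /\ rule_ok tr ra s (map label ch)
    end.

Definition is_tableau {St A} (tr : St -> A -> St -> Prop) (t : tree St A) : Prop :=
  sdefs (label t) = [] /\ forall p, is_node t p -> node_ok tr t p.

Definition companion_node {St A} (t : tree St A) (m : addr) : Prop := rule_at t m RUn.

Definition cl_cond {St A} (t : tree St A) (m n : addr) : Prop :=
  is_leaf t n /\ strict_anc m n /\
  exists sm sn, seq_at t m sm /\ seq_at t n sn /\ sform sn = sform sm /\
                subset (sset sn) (sset sm).

(* companion leaves, by recursion on a fuel bound; fuel = length n suffices since
   each recursive call moves m strictly down towards n *)
Fixpoint cl_fuel {St A} (k : nat) (t : tree St A) (m n : addr) : Prop :=
  match k with
  | 0 => False
  | S k' => cl_cond t m n /\
            ~ (exists m', companion_node t m' /\ strict_anc m m' /\ cl_fuel k' t m' n)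
  end.

Definition companion_leaf {St A} (t : tree St A) (m n : addr) : Prop :=
  cl_fuel (length n) t m n.

Definition lt_child {St A} (tr : St -> A -> St -> Prop) (t : tree St A) (n' n : addr)
  (s' s : St) : Prop :=
  (exists i, n' = n ++ [i]) /\ is_node t n' /\ inS t n' s' /\ inS t n s /\
  ((rule_at t n RBox /\ exists sn K g, seq_at t n sn /\ sform sn = FBox K g /\ step tr K s s') \/
   (exists f, rule_at t n (RDia f) /\ s' = f s) \/
   (~ rule_at t n RBox /\ ~ (exists f, rule_at t n (RDia f)) /\ s' = s)).

Inductive lessdot {St A} (tr : St -> A -> St -> Prop) (t : tree St A)
  : addr -> addr -> St -> St -> Prop :=
| ld_refl : forall n s, is_node t n -> lessdot tr t n n s s
| ld_step : forall n' m n s' s'' s,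
    lessdot tr t n' m s' s'' -> lt_child tr t m n s'' s -> lessdot tr t n' n s' s.

Inductive subm {St A} (tr : St -> A -> St -> Prop) (t : tree St A)
  : addr -> St -> St -> Prop :=
| subm_intro : forall m m' s' s,
    companion_leaf t m m' -> inS t m' s' -> subnn tr t m' m s' s -> subm tr t m s' s
with subnn {St A} (tr : St -> A -> St -> Prop) (t : tree St A)
  : addr -> addr -> St -> St -> Prop :=
| subnn_ld : forall n' n s' s,
    inS t n' s' -> inS t n s -> lessdot tr t n' n s' s -> subnn tr t n' n s' s
| subnn_comp : forall n' n s' s m u u',
    inS t n' s' -> inS t n s ->
    companion_node t m -> m <> n -> m <> n' ->
    inS t m u -> inS t m u' ->
    subnn tr t n' m s' u' -> subm_plus tr t m u' u -> lessdot tr t m n u s ->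
    subnn tr t n' n s' s
with subm_plus {St A} (tr : St -> A -> St -> Prop) (t : tree St A)
  : addr -> St -> St -> Prop :=
| smp_one : forall m x y, subm tr t m x y -> subm_plus tr t m x y
| smp_trans : forall m x y z, subm_plus tr t m x y -> subm_plus tr t m y z ->
    subm_plus tr t m x z.

Definition leaf_successful {St A} (tr : St -> A -> St -> Prop) (V : var -> St -> Prop)
  (t : tree St A) (n : addr) : Prop :=
  exists s, seq_at t n s /\
  ( (exists Z, sform s = FVar Z /\ ~ dom (sdefs s) Z /\ subset (sset s) (V Z)) \/
    (exists Z, sform s = FNeg (FVar Z) /\ ~ dom (sdefs s) Z /\
               forall x, sset s x -> ~ V Z x) \/
    (exists U Z g, sform s = FVar U /\ lookup (sdefs s) U = Some (FNu Z g)) \/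
    (exists U Z g, sform s = FVar U /\ lookup (sdefs s) U = Some (FMu Z g) /\
       exists m, companion_node t m /\ companion_leaf t m n /\
                 well_founded (subm tr t m)) ).

Definition successful {St A} (tr : St -> A -> St -> Prop) (V : var -> St -> Prop)
  (t : tree St A) : Prop :=
  forall n, is_leaf t n -> leaf_successful tr V t n.

From Stdlib Require Import List Arith Lia Classical ClassicalEpsilon.
Import ListNotations.

(* The tableau unfolds sigma Z.Phi once into a definition constant U and then decomposes
   the fixpoint-free body Phi[Z:=U] rule by rule.  Its leaves are literals, satisfied by
   their sets, and occurrences of U, whose companion is the unfolding node; so for nu every
   leaf is successful.  Disjunctions and diamonds are resolved through a chain of
   approximants (the fixpoint alone for nu, the transfinite approximants of the least
   fixpoint for mu): a state goes left at a disjunction when every approximant satisfying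
   the disjunction there also satisfies the left disjunct, and a diamond witness is taken in
   the least approximant satisfying the diamond.  Along every trace the next state then lies
   in each approximant in which the previous one lies, so a mu-cycle from x back to y puts y
   into every approximant B with x in Phi(B); taking for B the union of the approximants
   missing x shows that y has smaller rank than x, hence <:_m is well founded. *)

Section Semantics.
Context {St A : Type} (tr : St -> A -> St -> Prop).

Lemma upd_eq (V : var -> St -> Prop) X P : upd V X P X = P.
Proof. unfold upd. now rewrite Nat.eqb_refl. Qed.

Lemma upd_neq (V : var -> St -> Prop) X Y P : Y <> X -> upd V X P Y = V Y.
Proof. intros H. unfold upd. apply Nat.eqb_neq in H. now rewrite H. Qed.

Lemma sem_upd_mono (h : form A) V X P Q :
  fixpoint_free h -> pnf h -> positive X h -> subset P Q ->
  subset (sem tr (upd V X P) h) (sem tr (upd V X Q) h).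
Proof.
  unfold positive. revert V.
  induction h as [Y | g _ | h1 IH1 h2 IH2 | h1 IH1 h2 IH2 | K g IH | K g IH | Y g _ | Y g _];
    simpl; intros V Hff Hpnf Hpos HPQ x Hx.
  - destruct (Nat.eq_dec Y X) as [-> | HYX].
    + rewrite upd_eq in *. auto.
    + rewrite upd_neq in * by exact HYX. exact Hx.
  - destruct Hpnf as [Y ->]. simpl in *.
    assert (HYX : Y <> X) by (intros E; discriminate (Hpos E)).
    rewrite upd_neq in * by exact HYX. exact Hx.
  - destruct Hff, Hpnf, Hpos, Hx. split; [eapply IH1 | eapply IH2]; eauto.
  - destruct Hff, Hpnf, Hpos, Hx; [left; eapply IH1 | right; eapply IH2]; eauto.
  - intros y Hy. eapply IH; eauto.
  - destruct Hx as [y [Hy Hgy]]. exists y. split; [exact Hy | eapply IH; eauto].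
  - contradiction.
  - contradiction.
Qed.

Lemma sem_subst_fresh (g : form A) V Z U P x :
  fixpoint_free g -> ~ occurs_in U g ->
  (sem tr (upd V U P) (subst Z U g) x <-> sem tr (upd V Z P) g x).
Proof.
  revert x.
  induction g as [Y | g IH | g1 IH1 g2 IH2 | g1 IH1 g2 IH2 | K g IH | K g IH | Y g _ | Y g _];
    simpl; intros x Hff HU.
  - destruct (Nat.eqb Y Z) eqn:E.
    + apply Nat.eqb_eq in E. subst Y. simpl. now rewrite !upd_eq.
    + apply Nat.eqb_neq in E. simpl. now rewrite !upd_neq.
  - now rewrite IH.
  - destruct Hff. rewrite IH1, IH2 by tauto. tauto.
  - destruct Hff. rewrite IH1, IH2 by tauto. tauto.
  - split; intros H y Hy; apply (IH y Hff HU); auto.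
  - split; intros [y [Hy H]]; exists y; split; auto; apply (IH y Hff HU); auto.
  - contradiction.
  - contradiction.
Qed.

Lemma bound_in_occurs_in (f : form A) X : bound_in X f -> occurs_in X f.
Proof. induction f; simpl; intuition. Qed.

Lemma free_in_occurs_in (f : form A) X : free_in X f -> occurs_in X f.
Proof. induction f; simpl; intuition. Qed.

Lemma fixpoint_free_not_bound_in (f : form A) X : fixpoint_free f -> ~ bound_in X f.
Proof. induction f; simpl; intuition eauto. Qed.

Lemma fixpoint_free_subst (g : form A) Z U : fixpoint_free g -> fixpoint_free (subst Z U g).
Proof.
  induction g as [Y | g IH | g1 IH1 g2 IH2 | g1 IH1 g2 IH2 | K g IH | K g IH | Y g _ | Y g _];
    simpl; try tauto.
  intros _. destruct (Nat.eqb Y Z); exact I.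
Qed.

Lemma pnf_subst (g : form A) Z U : fixpoint_free g -> pnf g -> pnf (subst Z U g).
Proof.
  induction g as [Y | g _ | g1 IH1 g2 IH2 | g1 IH1 g2 IH2 | K g IH | K g IH | Y g _ | Y g _];
    simpl; intros Hff Hpnf; try tauto.
  - destruct (Nat.eqb Y Z); exact I.
  - destruct Hpnf as [X ->]. simpl. destruct (Nat.eqb X Z); eauto.
Qed.

Lemma positive_subst (g : form A) Z U :
  fixpoint_free g -> ~ occurs_in U g -> positive Z g -> positive U (subst Z U g).
Proof.
  unfold positive. generalize true as b.
  induction g as [Y | g IH | g1 IH1 g2 IH2 | g1 IH1 g2 IH2 | K g IH | K g IH | Y g _ | Y g _];
    simpl; intros b Hff HU Hpos.
  - destruct (Nat.eqb Y Z) eqn:E; simpl.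
    + apply Nat.eqb_eq in E. exact (fun _ => Hpos E).
    + intros ->. contradiction.
  - now apply IH.
  - split; [apply IH1 | apply IH2]; tauto.
  - split; [apply IH1 | apply IH2]; tauto.
  - now apply IH.
  - now apply IH.
  - contradiction.
  - contradiction.
Qed.

Fixpoint max_var (f : form A) : var :=
  match f with
  | FVar X => X
  | FNeg g | FBox _ g | FDia _ g => max_var g
  | FAnd g h | FOr g h => max (max_var g) (max_var h)
  | FNu Y g | FMu Y g => max Y (max_var g)
  end.

Lemma occurs_in_le_max_var (f : form A) X : occurs_in X f -> X <= max_var f.
Proof.
  induction f as [Y | g IH | g IHg h IHh | g IHg h IHh | K g IH | K g IH | Y g IH | Y g IH];
    simpl; intros H.
  - lia.
  - auto.
  - destruct H as [H | H]; [apply IHg in H | apply IHh in H]; lia.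
  - destruct H as [H | H]; [apply IHg in H | apply IHh in H]; lia.
  - auto.
  - auto.
  - destruct H as [H | H]; [| apply IH in H]; lia.
  - destruct H as [H | H]; [| apply IH in H]; lia.
Qed.

Lemma exists_fresh_var (f : form A) : exists U, ~ occurs_in U f.
Proof. exists (S (max_var f)). intros H. apply occurs_in_le_max_var in H. lia. Qed.

End Semantics.

Definition rank_lt {St : Type} (Fam : (St -> Prop) -> Prop) (y x : St) : Prop :=
  exists Q, Fam Q /\ Q y /\ ~ Q x.

Section Approximants.
Context {St : Type}.
Variable F : (St -> Prop) -> St -> Prop.
Hypothesis F_mono : forall P Q, subset P Q -> subset (F P) (F Q).

(* The transfinite iterates of [F] from the empty set (the empty union), without ordinals. *)
Inductive approximant : (St -> Prop) -> Prop :=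
| approximant_F P : approximant P -> approximant (F P)
| approximant_sup (C : (St -> Prop) -> Prop) :
    (forall P, C P -> approximant P) -> approximant (fun x => exists P, C P /\ P x)
| approximant_ext P Q : approximant P -> seteq P Q -> approximant Q.

Lemma approximant_post P : approximant P -> subset P (F P).
Proof.
  induction 1 as [P _ IH | C _ IH | P Q _ IH EPQ]; intros x Hx.
  - exact (F_mono _ _ IH x Hx).
  - destruct Hx as [P [HCP HPx]].
    apply (F_mono P); [intros y Hy; now exists P | exact (IH P HCP x HPx)].
  - apply EPQ in Hx. apply (F_mono P); [intros y Hy; now apply EPQ | exact (IH x Hx)].
Qed.

Lemma approximant_sub_prefixpoint Pre :
  subset (F Pre) Pre -> forall P, approximant P -> subset P Pre.
Proof.
  intros HPre. induction 1 as [P _ IH | C _ IH | P Q _ IH EPQ]; intros x Hx.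
  - apply HPre. exact (F_mono _ _ IH x Hx).
  - destruct Hx as [P [HCP HPx]]. exact (IH P HCP x HPx).
  - apply IH, EPQ, Hx.
Qed.

(* Zermelo's tower argument: every approximant is [normal], and a normal set is
   comparable with every approximant. *)
Definition normal (P : St -> Prop) : Prop :=
  forall Q, approximant Q -> subset Q P -> ~ subset P Q -> subset (F Q) P.

Lemma normal_compare P :
  normal P -> forall Q, approximant Q -> subset Q P \/ subset (F P) Q.
Proof.
  intros HP. induction 1 as [Q HQ IH | C HC IH | Q Q' _ IH EQ].
  - destruct IH as [HQP | HFPQ].
    + destruct (classic (subset P Q)) as [HPQ | HnPQ].
      * right. now apply F_mono.
      * left. now apply HP.
    + right. intros x Hx. apply approximant_post; auto.
  - destruct (classic (exists P', C P' /\ subset (F P) P')) as [[P' [HCP' HP']] | Hn].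
    + right. intros x Hx. exists P'. auto.
    + left. intros x [P' [HCP' HP'x]].
      destruct (IH P' HCP') as [H | H]; [exact (H x HP'x) |].
      exfalso. apply Hn. eauto.
  - destruct IH as [H | H]; [left | right]; intros x Hx; [apply H, EQ, Hx | apply EQ, H, Hx].
Qed.

Lemma approximant_normal P : approximant P -> normal P.
Proof.
  induction 1 as [P HP IH | C HC IH | P P' _ IH EP].
  - intros Q HQ _ HnFPQ.
    destruct (normal_compare P IH Q HQ) as [HQP | HFPQ]; [now apply F_mono | contradiction].
  - intros Q HQ HQC HnCQ.
    apply not_all_ex_not in HnCQ as [x Hx]. apply imply_to_and in Hx as [[P [HCP HPx]] HQx].
    destruct (normal_compare P (IH P HCP) Q HQ) as [HQP | HFPQ].
    + intros y Hy. exists P. split; [exact HCP |].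
      apply (IH P HCP Q HQ HQP); [intros HPQ; exact (HQx (HPQ x HPx)) | exact Hy].
    + exfalso. apply HQx, HFPQ, approximant_post; auto.
  - intros Q HQ HQP' HnP'Q x Hx. apply EP.
    apply (IH Q HQ); [intros y Hy; apply EP, HQP', Hy | intros HPQ | exact Hx].
    apply HnP'Q. intros y Hy. apply HPQ, EP, Hy.
Qed.

Lemma approximant_chain P Q : approximant P -> approximant Q -> subset P Q \/ subset Q P.
Proof.
  intros HP HQ.
  destruct (normal_compare P (approximant_normal P HP) Q HQ) as [H | H]; [now right | left].
  intros x Hx. apply H, approximant_post; auto.
Qed.

Lemma approximant_Acc P : approximant P -> forall x, P x -> Acc (rank_lt approximant) x.
Proof.
  induction 1 as [P HP IH | C _ IH | P P' _ IH EP]; intros x Hx.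
  - constructor. intros y [Q [HQ [HQy HQx]]].
    destruct (normal_compare P (approximant_normal P HP) Q HQ) as [H | H].
    + exact (IH y (H y HQy)).
    + contradiction (HQx (H x Hx)).
  - destruct Hx as [P [HCP HPx]]. exact (IH P HCP x HPx).
  - apply IH, EP, Hx.
Qed.

Lemma rank_lt_approximant_wf : well_founded (rank_lt approximant).
Proof.
  intros x. constructor. intros y [Q [HQ [HQy _]]]. exact (approximant_Acc Q HQ y HQy).
Qed.

Definition lfp (x : St) : Prop := forall P, subset (F P) P -> P x.

Lemma approximant_lfp : approximant lfp.
Proof.
  set (Union := fun x => exists P, approximant P /\ P x).
  assert (HUnion : approximant Union) by (apply approximant_sup; auto).
  apply (approximant_ext Union); [exact HUnion |]. intros x. split.
  - intros [P [HP HPx]] Pre HPre. exact (approximant_sub_prefixpoint Pre HPre P HP x HPx).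
  - intros Hx. apply Hx. intros y Hy. exists (F Union). split; [now apply approximant_F | exact Hy].
Qed.

Lemma approximant_least (C : (St -> Prop) -> Prop) :
  (forall P Q, approximant P -> approximant Q -> subset P Q -> C P -> C Q) ->
  forall Q0, approximant Q0 -> C Q0 ->
  exists P, approximant P /\ C P /\ forall Q, approximant Q -> C Q -> subset P Q.
Proof.
  intros C_up Q0 HQ0 HCQ0.
  set (M := fun x => exists P, (approximant P /\ ~ C P) /\ P x).
  assert (HM : approximant M) by (apply approximant_sup; intros P [HP _]; exact HP).
  destruct (classic (C M)) as [HCM | HnCM].
  - exists M. split; [exact HM | split; [exact HCM |]].
    intros Q HQ HCQ x [P [[HP HnCP] HPx]].
    destruct (approximant_chain P Q HP HQ) as [HPQ | HQP]; [exact (HPQ x HPx) |].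
    contradiction (HnCP (C_up Q P HQ HP HQP HCQ)).
  - exists (F M). split; [now apply approximant_F | split].
    + apply NNPP. intros HnCFM. apply HnCM.
      assert (HFM : subset (F M) M).
      { intros x Hx. exists (F M).
        split; [split; [now apply approximant_F | exact HnCFM] | exact Hx]. }
      exact (C_up Q0 M HQ0 HM (approximant_sub_prefixpoint M HFM Q0 HQ0) HCQ0).
    + intros Q HQ HCQ.
      destruct (normal_compare M (approximant_normal M HM) Q HQ) as [HQM | HFMQ]; [| exact HFMQ].
      contradiction (HnCM (C_up Q M HQ HM HQM HCQ)).
Qed.

Lemma lfp_rank x : lfp x -> exists B, approximant B /\ ~ B x /\ F B x.
Proof.
  intros Hx.
  set (B := fun y => exists P, (approximant P /\ ~ P x) /\ P y).
  assert (HB : approximant B) by (apply approximant_sup; intros P [HP _]; exact HP).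
  exists B. split; [exact HB | split].
  - intros [P [[_ HnPx] HPx]]. contradiction.
  - apply NNPP. intros HnFBx.
    assert (HFB : subset (F B) B).
    { intros y Hy. exists (F B).
      split; [split; [now apply approximant_F | exact HnFBx] | exact Hy]. }
    destruct (Hx B HFB) as [P [[_ HnPx] HPx]]. contradiction.
Qed.

End Approximants.

Section Trees.
Context {St A : Type}.

Lemma subtree_app (t : tree St A) p q :
  subtree t (p ++ q) = match subtree t p with Some t' => subtree t' q | None => None end.
Proof.
  revert t. induction p as [|i p IH]; intros [s r ch]; simpl; [reflexivity |].
  destruct (nth_error ch i); [apply IH | reflexivity].
Qed.

Lemma strict_anc_irrefl (p : addr) : ~ strict_anc p p.
Proof.
  intros [r [Hr E]]. apply (f_equal (@length nat)) in E. rewrite length_app in E.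
  destruct r; [contradiction | simpl in E; lia].
Qed.

Lemma companion_leaf_cond (t : tree St A) m n : companion_leaf t m n -> cl_cond t m n.
Proof. unfold companion_leaf. destruct (length n); simpl; tauto. Qed.

Lemma is_deflist_nil : is_deflist (@nil (var * form A)).
Proof.
  split; [constructor | split]; [intros ? ? [] | intros [|i] ? ? ? ? ? Hi; discriminate].
Qed.

Lemma lt_child_step (tr : St -> A -> St -> Prop) (t : tree St A) n n' s r ch y x :
  subtree t n = Some (Node s r ch) -> lt_child tr t n' n y x ->
  match r with
  | Some RBox => exists K g, sform s = FBox K g /\ step tr K x y
  | Some (RDia f) => y = f x
  | _ => y = x
  end.
Proof.
  intros Hn (_ & _ & _ & _ & Hcases).
  assert (Hrule : forall ra, rule_at t n ra -> r = Some ra).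
  { intros ra (s' & ch' & Hn'). rewrite Hn in Hn'. congruence. }
  destruct Hcases as [(Hbox & sn & K & g & (r' & ch' & Hsn) & Hf & Hstep)
                     | [(f & Hdia & ->) | (Hnbox & Hndia & ->)]].
  - rewrite (Hrule _ Hbox). rewrite Hn in Hsn. injection Hsn as <- _ _. eauto.
  - now rewrite (Hrule _ Hdia).
  - destruct r as [[| | | f | | |] |]; try reflexivity.
    + contradiction Hnbox. now exists s, ch.
    + contradiction Hndia. exists f, s, ch. exact Hn.
Qed.

End Trees.

Definition successful_tableau_for {St A : Type} (tr : St -> A -> St -> Prop)
  (V : var -> St -> Prop) (f : form A) (t : tree St A) : Prop :=
  is_tableau tr t /\ seteq (sset (label t)) (sem tr V f) /\
  sdefs (label t) = [] /\ sform (label t) = f /\ successful tr V t.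

Section Construction.
Context {St A : Type} (tr : St -> A -> St -> Prop) (V : var -> St -> Prop).
Variables (U Z : var) (Phi sPhi : form A).
Hypotheses (Phi_ff : fixpoint_free Phi) (Phi_pnf : pnf Phi) (Phi_pos : positive Z Phi).
Hypothesis sPhi_fix : sPhi = FNu Z Phi \/ sPhi = FMu Z Phi.
Hypothesis U_fresh : ~ occurs_in U sPhi.

Definition semU (h : form A) (Q : St -> Prop) : St -> Prop := sem tr (upd V U Q) h.
Definition wf_body (h : form A) : Prop := fixpoint_free h /\ pnf h /\ positive U h.
Definition PhiU : form A := subst Z U Phi.

Lemma wf_body_PhiU : wf_body PhiU.
Proof.
  assert (HU : ~ occurs_in U Phi).
  { intros H. apply U_fresh. destruct sPhi_fix as [-> | ->]; now right. }
  split; [| split];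
    [apply fixpoint_free_subst | apply pnf_subst | apply positive_subst]; assumption.
Qed.

Lemma semU_mono h P Q : wf_body h -> subset P Q -> subset (semU h P) (semU h Q).
Proof. intros (Hff & Hpnf & Hpos). now apply sem_upd_mono. Qed.

Variables (Sfix : St -> Prop) (Fam : (St -> Prop) -> Prop).
Hypotheses (Fam_Sfix : Fam Sfix) (Sfix_post : subset Sfix (semU PhiU Sfix)).
Hypothesis Fam_chain : forall P Q, Fam P -> Fam Q -> subset P Q \/ subset Q P.
Hypothesis Fam_least : forall C : (St -> Prop) -> Prop,
  (forall P Q, Fam P -> Fam Q -> subset P Q -> C P -> C Q) -> C Sfix ->
  exists P, Fam P /\ C P /\ forall Q, Fam Q -> C Q -> subset P Q.

Definition tracks (h : form A) (x : St) (h' : form A) (y : St) : Prop :=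
  forall Q, Fam Q -> semU h Q x -> semU h' Q y.

Lemma tracks_or_right h1 h2 x : wf_body h1 -> wf_body h2 ->
  ~ tracks (FOr h1 h2) x h1 x -> tracks (FOr h1 h2) x h2 x.
Proof.
  intros G1 G2 Hn Q FQ HQ.
  apply not_all_ex_not in Hn as [Q0 Hn].
  apply imply_to_and in Hn as [FQ0 Hn]. apply imply_to_and in Hn as [H0 Hn1].
  assert (H02 : semU h2 Q0 x) by (destruct H0; [contradiction | assumption]).
  destruct (Fam_chain Q0 Q FQ0 FQ) as [HQ0Q | HQQ0].
  - exact (semU_mono h2 Q0 Q G2 HQ0Q x H02).
  - destruct HQ as [HQ | HQ]; [| exact HQ].
    contradiction (Hn1 (semU_mono h1 Q Q0 G1 HQQ0 x HQ)).
Qed.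

Lemma dia_witness_exists K h z : exists y,
  wf_body h -> semU (FDia K h) Sfix z -> step tr K z y /\ tracks (FDia K h) z h y.
Proof.
  destruct (classic (wf_body h /\ semU (FDia K h) Sfix z)) as [[G HS] | Hn].
  - destruct (Fam_least (fun Q => semU (FDia K h) Q z)) as (Qm & FQm & (y & Hy & HQmy) & Hmin).
    + intros P Q _ _ HPQ. exact (semU_mono (FDia K h) P Q G HPQ z).
    + exact HS.
    + exists y. intros _ _. split; [exact Hy |].
      intros Q FQ HQ. exact (semU_mono h Qm Q G (Hmin Q FQ HQ) y HQmy).
  - exists z. intros G HS. contradiction (Hn (conj G HS)).
Qed.

Definition dia_witness K h z : St :=
  proj1_sig (constructive_indefinite_description _ (dia_witness_exists K h z)).

Lemma dia_witness_spec K h z : wf_body h -> semU (FDia K h) Sfix z ->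
  step tr K z (dia_witness K h z) /\ tracks (FDia K h) z h (dia_witness K h z).
Proof. unfold dia_witness. destruct constructive_indefinite_description as [y Hy]. exact Hy. Qed.

Definition defs : deflist A := [(U, sPhi)].

Fixpoint build (h : form A) (T : St -> Prop) : tree St A :=
  match h with
  | FAnd h1 h2 => Node (Seq T defs h) (Some RAnd) [build h1 T; build h2 T]
  | FOr h1 h2 => Node (Seq T defs h) (Some ROr)
      [build h1 (fun x => T x /\ tracks h x h1 x); build h2 (fun x => T x /\ ~ tracks h x h1 x)]
  | FBox K g => Node (Seq T defs h) (Some RBox) [build g (fun y => exists x, T x /\ step tr K x y)]
  | FDia K g => Node (Seq T defs h) (Some (RDia (dia_witness K g)))
      [build g (fun y => exists x, T x /\ y = dia_witness K g x)]
  | _ => Node (Seq T defs h) None []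
  end.

Definition admissible (h : form A) (T : St -> Prop) : Prop := wf_body h /\ subset T (semU h Sfix).

Lemma label_build h T : label (build h T) = Seq T defs h.
Proof. now destruct h. Qed.

Lemma build_inj h h' T T' : build h T = build h' T' -> h = h' /\ T = T'.
Proof. intros E. apply (f_equal label) in E. rewrite !label_build in E. now injection E. Qed.

Lemma build_child_admissible h T i t : admissible h T ->
  subtree (build h T) [i] = Some t -> exists h' T', t = build h' T' /\ admissible h' T'.
Proof.
  intros [G HT] Hi.
  destruct h as [X | g | h1 h2 | h1 h2 | K g | K g | Y g | Y g]; simpl in Hi;
    try (destruct i; discriminate); unfold admissible, wf_body, positive in *; simpl in G.
  - destruct i as [|[|i]]; [| | destruct i; discriminate]; injection Hi as <-; eexists _, _;
      (split; [reflexivity | split; [tauto | intros x Hx; apply (HT x Hx)]]).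
  - destruct i as [|[|i]]; [| | destruct i; discriminate]; injection Hi as <-; eexists _, _;
      (split; [reflexivity | split; [tauto |]]).
    + intros x [Hx Htr]. exact (Htr Sfix Fam_Sfix (HT x Hx)).
    + intros x [Hx Hntr].
      refine (tracks_or_right h1 h2 x _ _ Hntr Sfix Fam_Sfix (HT x Hx));
        unfold wf_body, positive; tauto.
  - destruct i as [|i]; [| destruct i; discriminate]. injection Hi as <-. eexists _, _.
    split; [reflexivity | split; [tauto |]].
    intros y (x & Hx & Hxy). exact (HT x Hx y Hxy).
  - destruct i as [|i]; [| destruct i; discriminate]. injection Hi as <-. eexists _, _.
    split; [reflexivity | split; [tauto |]].
    intros y (x & Hx & ->).
    destruct (dia_witness_spec K g x) as [_ Htr];
      [unfold wf_body, positive; tauto | exact (HT x Hx) |].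
    exact (Htr Sfix Fam_Sfix (HT x Hx)).
Qed.

Lemma build_subtree q : forall h T t, admissible h T ->
  subtree (build h T) q = Some t -> exists h' T', t = build h' T' /\ admissible h' T'.
Proof.
  induction q as [|i q IH]; intros h T t Hadm Hq.
  - injection Hq as <-. eauto.
  - change (i :: q) with ([i] ++ q) in Hq. rewrite subtree_app in Hq.
    destruct (subtree (build h T) [i]) as [c |] eqn:Hc; [| discriminate].
    destruct (build_child_admissible h T i c Hadm Hc) as (h' & T' & -> & Hadm').
    exact (IH h' T' t Hadm' Hq).
Qed.

Definition companion : tree St A := Node (Seq Sfix defs (FVar U)) (Some RUn) [build PhiU Sfix].
Definition fix_tableau : tree St A := Node (Seq Sfix [] sPhi) (Some RFix) [companion].

Lemma fix_tableau_subtree p t : subtree fix_tableau p = Some t ->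
  (p = [] /\ t = fix_tableau) \/ (p = [0] /\ t = companion) \/
  (exists q h T, p = 0 :: 0 :: q /\ t = build h T /\ admissible h T).
Proof.
  intros Hp. destruct p as [|[|i] p]; simpl in Hp.
  - injection Hp as <-. now left.
  - destruct p as [|[|j] q]; simpl in Hp.
    + injection Hp as <-. now right; left.
    + right; right.
      destruct (build_subtree q PhiU Sfix t (conj wf_body_PhiU Sfix_post) Hp)
        as (h & T & -> & Hadm).
      now exists q, h, T.
    + destruct j; discriminate.
  - destruct i; discriminate.
Qed.

Lemma dom_defs X : dom defs X <-> X = U.
Proof. unfold dom, defs. simpl. split; [intros [H | []]; auto | intros ->; auto]. Qed.

Lemma defs_is_deflist : is_deflist defs.
Proof.
  split; [| split].
  - simpl. constructor; [simpl; tauto | constructor].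
  - intros U' f HU' [<- | []] Hb. apply dom_defs in HU'. subst U'.
    apply U_fresh, bound_in_occurs_in, Hb.
  - intros [|i] [|j] Ui fi Uj fj Hi Hj _;
      try (destruct i; discriminate); try (destruct j; discriminate).
    injection Hi as <- <-. injection Hj as <- <-. intros Hf. apply U_fresh, free_in_occurs_in, Hf.
Qed.

Lemma wf_body_is_sequent h (T : St -> Prop) : wf_body h -> is_sequent (Seq T defs h).
Proof.
  intros (Hff & Hpnf & Hpos). split; [exact defs_is_deflist | split; [exact Hpnf |]].
  intros U' HU'. apply dom_defs in HU'. subst U'.
  split; [exact Hpos | now apply fixpoint_free_not_bound_in].
Qed.

Lemma root_node_ok : node_ok tr fix_tableau [].
Proof.
  intros s r ch H. injection H as <- <- <-. split.
  - split; [exact is_deflist_nil | split; [| intros U' []]].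
    destruct sPhi_fix as [-> | ->]; exact Phi_pnf.
  - exists RFix. split; [reflexivity |]. split; [destruct sPhi_fix; eauto |].
    split; [| intros x; tauto].
    exists U. split; [| split; reflexivity].
    split; [intros [] | split; [exact U_fresh | intros f []]].
Qed.

Lemma companion_node_ok : node_ok tr fix_tableau [0].
Proof.
  intros s r ch H. injection H as <- <- <-. split.
  - apply wf_body_is_sequent. repeat split.
  - exists RUn. split; [reflexivity |]. simpl. rewrite label_build.
    split; [| split; [reflexivity | intros x; tauto]].
    exists U, Z, Phi. simpl. rewrite Nat.eqb_refl.
    split; [reflexivity | split; [destruct sPhi_fix as [-> | ->]; auto | reflexivity]].
Qed.

Lemma build_rule_ok h T : admissible h T ->
  match build h T with
  | Node s (Some ra) ch => ch <> [] /\ rule_ok tr ra s (map label ch)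
  | Node _ None ch => ch = []
  end.
Proof.
  intros [G HT].
  destruct h as [X | g | h1 h2 | h1 h2 | K g | K g | Y g | Y g]; simpl; rewrite ?label_build;
    try reflexivity; (split; [discriminate |]).
  - repeat split; simpl; tauto.
  - repeat split; simpl; destruct (classic (tracks (FOr h1 h2) x h1 x)); tauto.
  - split; [exists K; split; [reflexivity | intros y; simpl; tauto] | reflexivity].
  - split; [exists K; split; [reflexivity |] | split; [intros y; simpl; tauto | reflexivity]].
    intros x Hx. apply dia_witness_spec; [| exact (HT x Hx)].
    destruct G as (? & ? & ?). now repeat split.
Qed.

Lemma admissible_leaf h T s r : admissible h T -> build h T = Node s r [] ->
  (h = FVar U /\ subset T Sfix) \/
  (exists X, X <> U /\ h = FVar X /\ subset T (V X)) \/
  (exists X, X <> U /\ h = FNeg (FVar X) /\ forall x, T x -> ~ V X x).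
Proof.
  intros [(Hff & Hpnf & Hpos) HT] Hb.
  destruct h as [X | g | h1 h2 | h1 h2 | K g | K g | Y g | Y g];
    try discriminate Hb; try contradiction.
  - destruct (Nat.eq_dec X U) as [-> | HXU].
    + left. split; [reflexivity |].
      intros x Hx. specialize (HT x Hx). unfold semU in HT. simpl in HT. now rewrite upd_eq in HT.
    + right; left. exists X. split; [exact HXU | split; [reflexivity |]].
      intros x Hx. specialize (HT x Hx). unfold semU in HT. simpl in HT. now rewrite upd_neq in HT.
  - destruct Hpnf as [X ->]. unfold positive in Hpos. simpl in Hpos.
    assert (HXU : X <> U) by (intros E; discriminate (Hpos E)).
    right; right. exists X. split; [exact HXU | split; [reflexivity |]].
    intros x Hx. specialize (HT x Hx). unfold semU in HT. simpl in HT. now rewrite upd_neq in HT.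
Qed.

Lemma build_node_ok q h T :
  subtree fix_tableau (0 :: 0 :: q) = Some (build h T) -> admissible h T ->
  node_ok tr fix_tableau (0 :: 0 :: q).
Proof.
  intros Hq Hadm s r ch Hs. rewrite Hq in Hs. injection Hs as Hb.
  assert (Es : s = Seq T defs h) by (rewrite <- (label_build h T), Hb; reflexivity). subst s.
  split; [exact (wf_body_is_sequent h T (proj1 Hadm)) |].
  pose proof (build_rule_ok h T Hadm) as Hrule. rewrite Hb in Hrule.
  destruct r as [ra |]; destruct ch as [| c ch].
  - now destruct Hrule.
  - exists ra. split; [reflexivity | apply Hrule].
  - split; [reflexivity |].
    destruct (admissible_leaf h T _ _ Hadm Hb)
      as [[-> HTS] | [(X & HXU & -> & _) | (X & HXU & -> & _)]].
    + right; right. exists U. split; [reflexivity | split; [now apply dom_defs |]].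
      exists [0], (Seq Sfix defs (FVar U)).
      split; [exists (0 :: q); split; [discriminate | reflexivity] |].
      split; [exists (Some RUn), [build PhiU Sfix]; reflexivity |].
      split; [reflexivity | exact HTS].
    + left. exists X. split; [now left | simpl; rewrite dom_defs; exact HXU].
    + left. exists X. split; [now right | simpl; rewrite dom_defs; exact HXU].
  - discriminate Hrule.
Qed.

Lemma fix_tableau_is_tableau : is_tableau tr fix_tableau.
Proof.
  split; [reflexivity |]. intros p Hp.
  destruct (subtree fix_tableau p) as [t |] eqn:Ht; [| contradiction].
  destruct (fix_tableau_subtree p t Ht) as [[-> ->] | [[-> ->] | (q & h & T & -> & -> & Hadm)]].
  - exact root_node_ok.
  - exact companion_node_ok.
  - exact (build_node_ok q h T Ht Hadm).
Qed.

Lemma companion_node_fix_tableau m : companion_node fix_tableau m -> m = [0].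
Proof.
  intros (s & ch & Hm).
  destruct (fix_tableau_subtree m _ Hm) as [[_ E] | [[-> _] | (q & h & T & _ & Hb & _)]].
  - discriminate E.
  - reflexivity.
  - destruct h; discriminate Hb.
Qed.

Lemma U_leaf_companion_leaf q s r :
  subtree fix_tableau (0 :: 0 :: q) = Some (Node s r []) ->
  sform s = FVar U -> subset (sset s) Sfix -> companion_leaf fix_tableau [0] (0 :: 0 :: q).
Proof.
  intros Hn Hf HS. unfold companion_leaf. simpl. split.
  - split; [now exists s, r |]. split; [exists (0 :: q); split; [discriminate | reflexivity] |].
    exists (Seq Sfix defs (FVar U)), s.
    split; [exists (Some RUn), [build PhiU Sfix]; reflexivity |].
    split; [now exists r, [] |]. split; [exact Hf | exact HS].
  - intros (m & Hm & Hanc & _). apply companion_node_fix_tableau in Hm. subst m.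
    exact (strict_anc_irrefl _ Hanc).
Qed.

Lemma fix_tableau_successful :
  (sPhi = FMu Z Phi -> well_founded (subm tr fix_tableau [0])) -> successful tr V fix_tableau.
Proof.
  intros Hwf n (s & r & Hn).
  destruct (fix_tableau_subtree n _ Hn) as [[_ E] | [[_ E] | (q & h & T & -> & Hb & Hadm)]];
    try discriminate E.
  exists s. split; [now exists r, [] |].
  assert (Es : s = Seq T defs h) by (rewrite <- (label_build h T), <- Hb; reflexivity). subst s.
  destruct (admissible_leaf h T _ r Hadm (eq_sym Hb))
    as [[-> HTS] | [(X & HXU & -> & HTX) | (X & HXU & -> & HTX)]].
  - right; right. pose proof (U_leaf_companion_leaf q _ r Hn eq_refl HTS) as Hcl.
    assert (Hlk : lookup defs U = Some sPhi) by (simpl; now rewrite Nat.eqb_refl).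
    destruct sPhi_fix as [E | E]; rewrite E in Hlk; [left | right]; exists U, Z, Phi.
    + split; [reflexivity | exact Hlk].
    + split; [reflexivity | split; [exact Hlk |]]. exists [0].
      split; [exists (Seq Sfix defs (FVar U)), [build PhiU Sfix]; reflexivity |].
      split; [exact Hcl | exact (Hwf E)].
  - left. exists X. split; [reflexivity | split; [simpl; now rewrite dom_defs | exact HTX]].
  - right; left. exists X. split; [reflexivity | split; [simpl; now rewrite dom_defs | exact HTX]].
Qed.

Lemma build_child_tracks h T s r ch i h' T' x y :
  admissible h T -> build h T = Node s r ch -> subtree (build h T) [i] = Some (build h' T') ->
  T x -> T' y ->
  match r with
  | Some RBox => exists K g, sform s = FBox K g /\ step tr K x y
  | Some (RDia f) => y = f x
  | _ => y = x
  end -> tracks h x h' y.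
Proof.
  intros [G HT] Hb Hi Hx Hy Hrel. unfold wf_body, positive in G.
  destruct h as [X | g | h1 h2 | h1 h2 | K g | K g | Y g | Y g]; injection Hb as <- <- <-;
    simpl in G, Hi; try (destruct i; discriminate).
  - destruct i as [|[|i]]; [| | destruct i; discriminate]; injection Hi as Hi;
      apply build_inj in Hi as [<- <-]; subst y; intros Q _ [H1 H2]; assumption.
  - destruct i as [|[|i]]; [| | destruct i; discriminate]; injection Hi as Hi;
      apply build_inj in Hi as [<- <-]; subst y; destruct Hy as [_ Hy]; [exact Hy |].
    apply tracks_or_right; [unfold wf_body, positive; tauto .. | exact Hy].
  - destruct i as [|i]; [| destruct i; discriminate]. injection Hi as Hi.
    apply build_inj in Hi as [<- <-]. destruct Hrel as (K' & g' & E & Hstep).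
    injection E as <- <-. intros Q _ HQ. exact (HQ y Hstep).
  - destruct i as [|i]; [| destruct i; discriminate]. injection Hi as Hi.
    apply build_inj in Hi as [<- <-]. subst y.
    apply dia_witness_spec; [unfold wf_body, positive; tauto | exact (HT x Hx)].
Qed.

Lemma lt_child_tracks n n' h T y x :
  subtree fix_tableau n = Some (build h T) -> admissible h T -> lt_child tr fix_tableau n' n y x ->
  exists h' T', subtree fix_tableau n' = Some (build h' T') /\ admissible h' T' /\ tracks h x h' y.
Proof.
  intros Hn Hadm Hlt.
  pose proof Hlt as ((i & ->) & _ & (s' & (r' & ch' & Hs') & Hy) & (s & (r & ch & Hs) & Hx) & _).
  rewrite Hn in Hs. injection Hs as Hb.
  rewrite subtree_app, Hn in Hs' |- *.
  destruct (build_child_admissible h T i _ Hadm Hs') as (h' & T' & Ec & Hadm').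
  exists h', T'. rewrite Hs', Ec. split; [reflexivity | split; [exact Hadm' |]].
  assert (Es : s = Seq T defs h) by (rewrite <- (label_build h T), Hb; reflexivity).
  assert (Es' : s' = Seq T' defs h') by (rewrite <- (label_build h' T'), <- Ec; reflexivity).
  subst s s'. rewrite Ec in Hs'.
  apply (build_child_tracks h T _ r ch i h' T' x y Hadm Hb Hs' Hx Hy).
  rewrite Hb in Hn. exact (lt_child_step tr fix_tableau n _ _ r ch y x Hn Hlt).
Qed.

Lemma lessdot_tracks n' n y x : lessdot tr fix_tableau n' n y x ->
  forall h T, subtree fix_tableau n = Some (build h T) -> admissible h T ->
  exists h' T', subtree fix_tableau n' = Some (build h' T') /\ tracks h x h' y.
Proof.
  induction 1 as [n x _ | n' m n y z x _ IH Hlt]; intros h T Hn Hadm.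
  - exists h, T. split; [exact Hn | intros Q _ HQ; exact HQ].
  - destruct (lt_child_tracks n m h T z x Hn Hadm Hlt) as (h1 & T1 & Hm & Hadm1 & Htr1).
    destruct (IH h1 T1 Hm Hadm1) as (h' & T' & Hn' & Htr2).
    exists h', T'. split; [exact Hn' |]. intros Q FQ HQ. exact (Htr2 Q FQ (Htr1 Q FQ HQ)).
Qed.

Lemma subm_tracks y x : subm tr fix_tableau [0] y x -> Sfix x /\ tracks PhiU x (FVar U) y.
Proof.
  intros H. inversion H as [m n y' x' Hcl _ Hsub]; subst.
  destruct (companion_leaf_cond _ _ _ Hcl) as (_ & Hanc & sm & sn & Hsm & Hsn & Hform & _).
  inversion Hsub as [? ? ? ? _ Hx Hld | ? ? ? ? m ? ? _ _ Hc Hne _ _ _ _ _ _]; subst.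
  2: { apply companion_node_fix_tableau in Hc. contradiction. }
  inversion Hld as [? ? _ | ? m ? ? z ? Hld' Hlt]; subst.
  { contradiction (strict_anc_irrefl _ Hanc). }
  assert (Hzx : z = x) by exact (lt_child_step tr fix_tableau [0] _ _ _ _ _ _ eq_refl Hlt). subst z.
  destruct Hlt as ((i & ->) & Hnode & _).
  destruct i as [|i]; [| contradiction Hnode; destruct i; reflexivity].
  destruct (lessdot_tracks _ _ _ _ Hld' PhiU Sfix eq_refl (conj wf_body_PhiU Sfix_post))
    as (h' & T' & Hn' & Htr).
  destruct Hsm as (rm & chm & Hsm). injection Hsm as <- _ _.
  destruct Hsn as (rn & chn & Hsn). rewrite Hn' in Hsn. injection Hsn as Hsn.
  destruct Hx as (sx & (rx & chx & Hsx) & Hx). injection Hsx as <- _ _.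
  split; [exact Hx |].
  apply (f_equal label) in Hsn. rewrite label_build in Hsn. simpl in Hsn. subst sn.
  simpl in Hform. subst h'. exact Htr.
Qed.

Lemma subm_wf : well_founded (rank_lt Fam) ->
  (forall x, Sfix x -> exists B, Fam B /\ ~ B x /\ semU PhiU B x) ->
  well_founded (subm tr fix_tableau [0]).
Proof.
  intros Hwf Hrank x. induction (Hwf x) as [x _ IH]. constructor. intros y Hy.
  destruct (subm_tracks y x Hy) as [Hx Htr]. destruct (Hrank x Hx) as (B & FB & HBx & HB).
  apply IH. exists B. split; [exact FB | split; [| exact HBx]].
  pose proof (Htr B FB HB) as HyB. unfold semU in HyB. simpl in HyB. now rewrite upd_eq in HyB.
Qed.

Lemma successful_tableau_exists :
  seteq Sfix (sem tr V sPhi) ->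
  (sPhi = FMu Z Phi -> well_founded (rank_lt Fam) /\
     forall x, Sfix x -> exists B, Fam B /\ ~ B x /\ semU PhiU B x) ->
  exists t, successful_tableau_for tr V sPhi t.
Proof.
  intros Hden Hmu. exists fix_tableau.
  split; [exact fix_tableau_is_tableau |].
  split; [exact Hden | split; [reflexivity | split; [reflexivity |]]].
  apply fix_tableau_successful. intros E. destruct (Hmu E) as [Hwf Hrank].
  exact (subm_wf Hwf Hrank).
Qed.

End Construction.

Section Instances.
Context {St A : Type} (tr : St -> A -> St -> Prop) (V : var -> St -> Prop).
Variables (U Z : var) (Phi : form A).
Hypotheses (Phi_ff : fixpoint_free Phi) (Phi_pnf : pnf Phi) (Phi_pos : positive Z Phi).

Lemma nu_successful_tableau : ~ occurs_in U (FNu Z Phi) ->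
  exists t, successful_tableau_for tr V (FNu Z Phi) t.
Proof.
  intros HU. assert (HUPhi : ~ occurs_in U Phi) by (intros H; apply HU; now right).
  set (G := sem tr V (FNu Z Phi)).
  apply (successful_tableau_exists tr V U Z Phi (FNu Z Phi) Phi_ff Phi_pnf Phi_pos
           (or_introl eq_refl) HU G (fun Q => seteq Q G)).
  - intros x. tauto.
  - intros x (S' & HS' & Hx). unfold semU, PhiU.
    apply sem_subst_fresh; [exact Phi_ff | exact HUPhi |].
    apply (sem_upd_mono tr Phi V Z S'); [exact Phi_ff | exact Phi_pnf | exact Phi_pos | |].
    + intros y Hy. now exists S'.
    + exact (HS' x Hx).
  - intros P Q HP HQ. left. intros x Hx. apply HQ, HP, Hx.
  - intros C _ HC. exists G. split; [intros x; tauto | split; [exact HC |]].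
    intros Q HQ _ x. apply HQ.
  - intros x. tauto.
  - discriminate.
Qed.

Lemma mu_successful_tableau : ~ occurs_in U (FMu Z Phi) ->
  exists t, successful_tableau_for tr V (FMu Z Phi) t.
Proof.
  intros HU. assert (HUPhi : ~ occurs_in U Phi) by (intros H; apply HU; now right).
  set (F := fun P => sem tr (upd V U P) (subst Z U Phi)).
  assert (F_mono : forall P Q, subset P Q -> subset (F P) (F Q)).
  { intros P Q. apply sem_upd_mono;
      [apply fixpoint_free_subst | apply pnf_subst | apply positive_subst]; assumption. }
  assert (HF : forall P x, F P x <-> sem tr (upd V Z P) Phi x)
    by (intros P x; apply sem_subst_fresh; assumption).
  apply (successful_tableau_exists tr V U Z Phi (FMu Z Phi) Phi_ff Phi_pnf Phi_pos
           (or_intror eq_refl) HU (lfp F) (approximant F)).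
  - exact (approximant_lfp F F_mono).
  - exact (approximant_post F F_mono _ (approximant_lfp F F_mono)).
  - exact (approximant_chain F F_mono).
  - intros C HC HCL. exact (approximant_least F F_mono C HC _ (approximant_lfp F F_mono) HCL).
  - intros x. split; intros Hx P HP; apply Hx; intros y Hy; apply HP, HF, Hy.
  - intros _. split; [exact (rank_lt_approximant_wf F F_mono) | exact (lfp_rank F)].
Qed.

End Instances.

Theorem corollary12 :
  forall (St A : Type) (tr : St -> A -> St -> Prop) (V : var -> St -> Prop)
         (Z : var) (nu : bool) (Phi : form A),
    fixpoint_free Phi -> pnf Phi ->
    let sPhi := if nu then FNu Z Phi else FMu Z Phi in
    wellformed sPhi ->
    exists t : tree St A,
      is_tableau tr t /\
      seteq (sset (label t)) (sem tr V sPhi) /\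
      sdefs (label t) = [] /\
      sform (label t) = sPhi /\
      successful tr V t.
Proof.
  intros St A tr V Z nu Phi Hff Hpnf sPhi Hwf.
  destruct (exists_fresh_var sPhi) as [U HU].
  destruct nu; destruct Hwf as [Hpos _].
  - exact (nu_successful_tableau tr V U Z Phi Hff Hpnf Hpos HU).
  - exact (mu_successful_tableau tr V U Z Phi Hff Hpnf Hpos HU).
Qed.
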